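(* For all graphs $G$ and $H$ (with non-empty vertex sets), $$\operatorname{tw}(G\boxtimes H)\geq \eta(H)(\operatorname{tw}(G)+1)-1.$$
   Context: $\operatorname{tw}$ denotes treewidth. The Hadwiger number $\eta(H)$ is the maximum integer $t$ such that $K_t$ is a minor of $H$. The strong product $G\boxtimes H$ has vertex set $V(G)\times V(H)$, with distinct vertices $(a,v),(b,u)$ adjacent iff ($a=b$ or $ab\in E(G)$) and ($u=v$ or $uv\in E(H)$). *)

(* Finite simple graphs: a finType V with a symmetric,
   irreflexive relation e : rel V. *)
From Stdlib Require Import ClassicalEpsilon.
From mathcomp Require Import all_boot.
Set Implicit Arguments. Unset Strict Implicit. Unset Printing Implicit Defensive.

Definition induced_rel (T : finType) (e : rel T) (S : {set T}) : rel T :=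
  fun x y => [&& e x y, x \in S & y \in S].

(* S induces a connected subgraph (vacuous for S empty) *)
Definition connected_in (T : finType) (e : rel T) (S : {set T}) : bool :=
  [forall x in S, forall y in S, connect (induced_rel e S) x y].

(* a (finite, nonempty) tree: connected graph with |I|-1 edges
   (each edge is counted twice as an ordered pair) *)
Definition is_tree (I : finType) (t : rel I) : Prop :=
  [/\ symmetric t, irreflexive t, 0 < #|I|,
      (forall i j, connect t i j)
    & #|[set p : I * I | t p.1 p.2]| = 2 * (#|I| - 1)].

Definition tree_decomposition (V : finType) (e : rel V)
    (I : finType) (t : rel I) (B : I -> {set V}) : Prop :=
  [/\ is_tree t,
      (forall v, exists i, v \in B i),
      (forall u v, e u v -> exists i, (u \in B i) && (v \in B i))
    & (forall v, connected_in t [set i | v \in B i])].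

Definition has_tw_le (V : finType) (e : rel V) (k : nat) : Prop :=
  exists (I : finType) (t : rel I) (B : I -> {set V}),
    tree_decomposition e t B /\ forall i, #|B i| <= k.+1.

Lemma has_tw_le_ex (V : finType) (e : rel V) : exists k, has_tw_le e k.
Proof.
exists #|V|; exists unit, (fun _ _ => false), (fun _ => setT); split; last first.
  by move=> _; rewrite cardsT.
split.
- split.
  + by [].
  + by [].
  + by rewrite card_unit.
  + by case; case; rewrite connect0.
  + rewrite card_unit /=; apply/eqP; rewrite cards_eq0; apply/eqP/setP=> p.
    by rewrite !inE.
- by move=> v; exists tt; rewrite inE.
- by move=> u v _; exists tt; rewrite !inE.
- by move=> v; apply/forallP; case; apply/implyP=> _; apply/forallP; case;
     apply/implyP=> _; rewrite connect0.
Qed.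

Definition dec_tw (V : finType) (e : rel V) : pred nat :=
  fun k => if excluded_middle_informative (has_tw_le e k) then true else false.

Lemma dec_tw_ex (V : finType) (e : rel V) : exists k, dec_tw e k.
Proof.
have [k Hk] := has_tw_le_ex e; exists k; rewrite /dec_tw.
by case: excluded_middle_informative.
Qed.

Definition treewidth (V : finType) (e : rel V) : nat := ex_minn (dec_tw_ex e).

Definition has_K_minor (V : finType) (e : rel V) (n : nat) : bool :=
  [exists B : {ffun 'I_n -> {set V}},
    [&& [forall i, B i != set0],
        [forall i, connected_in e (B i)],
        [forall i, forall j, (i != j) ==> [disjoint B i & B j]]
      & [forall i, forall j, (i != j) ==>
           [exists x in B i, exists y in B j, e x y]]]].

(* Hadwiger number: largest n with K_n a minor (necessarily n <= |V|) *)
Definition hadwiger (V : finType) (e : rel V) : nat :=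
  \max_(n < #|V|.+1 | has_K_minor e n) (n : nat).

Definition strong_prod (V W : finType) (e : rel V) (f : rel W) : rel (V * W) :=
  fun x y => [&& x != y, (x.1 == y.1) || e x.1 y.1 & (x.2 == y.2) || f x.2 y.2].

(* Fix a tree decomposition (T, B) of G ⊠ H of width w and a model
   C_1, ..., C_n of K_n in H.  For a vertex v of G, the nodes of T whose bag
   meets {v} × C_j form a subtree T_{v,j}; these subtrees pairwise intersect,
   for a fixed v as well as across an edge vu of G.  By the Helly property of
   subtrees of a tree, putting v in the new bag of i whenever i lies in every
   T_{v,j} gives a tree decomposition of G.  Each such v contributes n distinct
   vertices (v, h_j), h_j ∈ C_j, to B i, so the new bags have at most
   (w + 1) / n elements, whence n (tw G + 1) <= w + 1. *)

From Stdlib Require Import ClassicalEpsilon.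
From mathcomp Require Import all_boot zify.
Set Implicit Arguments. Unset Strict Implicit. Unset Printing Implicit Defensive.

Lemma connect_crossing (T : finType) (R : rel T) (D : {pred T}) x y :
  connect R x y -> x \in D -> y \notin D ->
  exists a b, [/\ R a b, a \in D & b \notin D].
Proof.
case/connectP=> q + ->; elim: q x => [|z q IH] x /=; first by move=> _ ->.
case/andP=> Rxz pq xD lD; case: (boolP (z \in D)) => zD; first exact: IH z pq zD lD.
by exists x, z.
Qed.

Lemma connect_induced_sub (I : finType) (t : rel I) (S X : {set I}) a b :
  S \subset X -> connected_in t S -> a \in S -> b \in S ->
  connect (induced_rel t X) a b.
Proof.
move=> sSX cS aS bS; move/forallP/(_ a): cS; rewrite aS => /forallP/(_ b).
rewrite bS; apply: connect_sub => x y /and3P[txy xS yS]; apply: connect1.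
by rewrite /induced_rel txy !(subsetP sSX).
Qed.

Lemma connected_in_bigcup (I J : finType) (t : rel I) (g : rel J)
    (C : {set J}) (N : J -> {set I}) :
  connected_in g C -> {in C, forall h, connected_in t (N h)} ->
  {in C &, forall h h', g h h' -> N h :&: N h' != set0} ->
  connected_in t (\bigcup_(h in C) N h).
Proof.
move=> cC cN meetN; set X := \bigcup_(h in C) N h.
have subX h : h \in C -> N h \subset X by move=> hC; apply: bigcup_sup.
apply/forallP=> x; apply/implyP=> /bigcupP[h hC xN].
apply/forallP=> y; apply/implyP=> /bigcupP[h' h'C yN].
move/forallP/(_ h): cC; rewrite hC => /forallP/(_ h'); rewrite h'C.
case/connectP=> q + h'q; elim: q x h hC xN h'q => [|k q IH] x h hC xN /= lq.
  by move: hC xN; rewrite -lq => hC xN _; apply: connect_induced_sub (subX h' hC) _ xN yN;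
    apply: cN.
case/andP=> /and3P[ghk _ kC] pq.
have /set0Pn[z] := meetN h k hC kC ghk; rewrite inE => /andP[zh zk].
apply: connect_trans (connect_induced_sub (subX h hC) (cN h hC) xN zh) _.
exact: IH z k kC zk lq pq.
Qed.

Section RootedTree.
Variables (I : finType) (t : rel I) (r : I).

Definition reaches_in (k : nat) (x : I) : bool :=
  [exists q : k.-tuple I, path t r q && (last r q == x)].

Lemma reaches_in_or_unreachable x : exists k, reaches_in k x || ~~ connect t r x.
Proof.
case: (boolP (connect t r x)) => [/connectP[q pq ->]|nc]; last by exists 0; rewrite orbT.
by exists (size q); apply/orP; left; apply/existsP; exists (in_tuple q); rewrite pq eqxx.
Qed.

(* The distance from [r] to [x], with junk value 0 if [x] is unreachable. *)
Definition depth (x : I) : nat := ex_minn (reaches_in_or_unreachable x).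

Definition parent (x : I) : I :=
  odflt x [pick y | t x y && ((depth y).+1 == depth x)].

Lemma reaches_in_path q x : path t r q -> last r q = x -> reaches_in (size q) x.
Proof. by move=> pq lq; apply/existsP; exists (in_tuple q); rewrite pq lq eqxx. Qed.

Lemma reaches_in_depth x : connect t r x -> reaches_in (depth x) x.
Proof. by rewrite /depth; case: ex_minnP => k + _ c; rewrite c orbF. Qed.

Lemma depth_min x k : reaches_in k x -> depth x <= k.
Proof. by rewrite /depth; case: ex_minnP => m _ min_m rk; apply: min_m; rewrite rk. Qed.

Lemma depth_root : depth r = 0.
Proof. by apply/eqP; rewrite -leqn0; apply: depth_min (reaches_in_path (q := [::]) _ _). Qed.

Lemma depth_eq0 x : connect t r x -> depth x = 0 -> x = r.
Proof.
by move=> /reaches_in_depth + d0; rewrite d0 => /existsP[q /andP[_ /eqP <-]]; rewrite tuple0.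
Qed.

Lemma depth_edge x y : connect t r y -> t y x -> depth x <= (depth y).+1.
Proof.
move=> /reaches_in_depth/existsP[q /andP[pq /eqP lq]] tyx.
rewrite -(size_tuple q) -(size_rcons _ x); apply: depth_min; apply: reaches_in_path.
  by rewrite rcons_path pq lq.
by rewrite last_rcons.
Qed.

Lemma parent_root : parent r = r.
Proof.
by rewrite /parent; case: pickP => [y /andP[_ /eqP]|//]; rewrite depth_root.
Qed.

Hypothesis t_tree : is_tree t.

Let t_sym : symmetric t. Proof. by case: t_tree. Qed.
Let t_conn x : connect t r x. Proof. by case: t_tree. Qed.

Lemma parent_step x : x != r -> t x (parent x) /\ (depth (parent x)).+1 = depth x.
Proof.
move=> xr; suff [y txy dy] : exists2 y, t x y & (depth y).+1 = depth x.
  rewrite /parent; case: pickP => [z /andP[tz /eqP dz] //|none].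
  by have := none y; rewrite /= txy dy eqxx.
have /existsP[q /andP[pq /eqP lq]] := reaches_in_depth (t_conn x).
move: (size_tuple q) pq lq; case/lastP: (tval q) => [|q' z] /=.
  by move=> _ _ rx; rewrite rx eqxx in xr.
rewrite size_rcons rcons_path last_rcons => sq /andP[pq' tz] zx; subst z.
exists (last r q'); first by rewrite t_sym.
apply/eqP; rewrite eqn_leq -sq ltnS depth_min ?(reaches_in_path pq') //=.
by rewrite sq depth_edge.
Qed.

Lemma depth_parent x : x != r -> (depth (parent x)).+1 = depth x.
Proof. by case/parent_step. Qed.

(* The 2(|I|-1) ordered edges of a tree are exactly the pairs
   (x, parent x) and (parent x, x) for x <> r. *)
Lemma tree_edge_parent x z : t x z ->
  (x != r /\ z = parent x) \/ (z != r /\ x = parent z).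
Proof.
case: t_tree => _ _ _ _ card_edges.
set A := [set (y, parent y) | y in [set~ r]].
set A' := [set (parent y, y) | y in [set~ r]].
have cardA : #|A| = #|I| - 1 by rewrite card_imset ?cardsC1 ?subn1 // => y y' [].
have cardA' : #|A'| = #|I| - 1 by rewrite card_imset ?cardsC1 ?subn1 // => y y' [].
have disjA : [disjoint A & A'].
  apply/pred0P=> p /=; apply/negP=> /andP[/imsetP[y + ->] /imsetP[y' + [ey ey']]].
  rewrite !inE => /depth_parent dy /depth_parent dy'.
  by rewrite ey' in dy; rewrite -ey in dy'; lia.
have subE : A :|: A' \subset [set p | t p.1 p.2].
  apply/subsetP=> p; rewrite !inE => /orP[]/imsetP[y + ->];
    by rewrite !inE => /parent_step[ty _] /=; rewrite // t_sym.
have EA : A :|: A' = [set p | t p.1 p.2].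
  apply/eqP; rewrite eqEcard subE card_edges /=.
  by rewrite cardsU (disjoint_setI0 disjA) cards0 subn0 cardA cardA' addnn mul2n.
move=> txz; have : (x, z) \in A :|: A' by rewrite EA inE.
by rewrite inE => /orP[]/imsetP[y]; rewrite !inE => yr [-> ->]; [left | right].
Qed.

Lemma depth_iter_parent k x : depth (iter k parent x) = depth x - k.
Proof.
elim: k => [|k IH]; first by rewrite subn0.
rewrite iterS; case: (eqVneq (iter k parent x) r) => [xr|/depth_parent].
  by move: IH; rewrite xr parent_root depth_root; lia.
by lia.
Qed.

Definition descendant (y z : I) : bool := iter (depth z - depth y) parent z == y.

Lemma descendant_refl y : descendant y y.
Proof. by rewrite /descendant subnn. Qed.

Lemma descendant_depth y z : descendant y z -> depth y <= depth z.
Proof.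
rewrite /descendant; case: leqP => // lt_zy.
rewrite (_ : _ - _ = 0) /=; last by lia.
by move/eqP=> zy; rewrite zy ltnn in lt_zy.
Qed.

Lemma descendant_parent y z : descendant y z -> z != y -> descendant y (parent z).
Proof.
move=> yz zy; have := descendant_depth yz; rewrite leq_eqVlt => /orP[/eqP dyz|lt_yz].
  by move: yz; rewrite /descendant dyz subnn /= => /eqP zy'; rewrite zy' eqxx in zy.
have zr : z != r by apply: contraTneq lt_yz => ->; rewrite depth_root.
have dz := depth_parent zr.
move: yz; rewrite /descendant (_ : depth z - _ = (depth (parent z) - depth y).+1) ?iterSr //.
by lia.
Qed.

Lemma descendant_child y z : z != r -> descendant y (parent z) -> descendant y z.
Proof.
move=> zr yz; have le_yz := descendant_depth yz; have dz := depth_parent zr.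
move: yz; rewrite /descendant (_ : depth z - _ = (depth (parent z) - depth y).+1) ?iterSr //.
by lia.
Qed.

(* A vertex of minimal depth in [S], with junk value [r] if [S] is empty. *)
Definition top (S : {set I}) : I :=
  odflt r [pick x in S | [forall y in S, depth x <= depth y]].

Lemma top_spec S : S != set0 ->
  top S \in S /\ {in S, forall y, depth (top S) <= depth y}.
Proof.
case/set0Pn=> x0 x0S; rewrite /top; case: pickP => [x /andP[xS /forall_inP min_x] //|none].
case: (arg_minnP depth x0S) => x xS min_x; move/negP: (none x); case.
by apply/andP; split=> //; apply/forall_inP.
Qed.

(* The path from [y] to [top S] inside [S] leaves the descendants of [y]
   through a tree edge, which must be the edge from [y] to its parent. *)
Lemma parent_in_subtree S y :
  connected_in t S -> S != set0 -> y \in S -> y != top S -> parent y \in S.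
Proof.
move=> cS /top_spec[sS min_s] yS ys; set s := top S in sS min_s ys *.
have ys_conn : connect (induced_rel t S) y s.
  by move/forall_inP/(_ y yS)/forall_inP: cS; apply.
have s_not_desc : ~~ descendant y s.
  apply: contra ys => desc_s; have le_ys := descendant_depth desc_s.
  have le_sy := min_s y yS; have d0 : depth s - depth y = 0 by lia.
  by move: desc_s; rewrite /descendant d0 eq_sym.
have [a [b [/and3P[tab aS bS]]]] :=
  connect_crossing (D := [pred z | descendant y z]) ys_conn (descendant_refl y) s_not_desc.
rewrite !inE => ya yb; case: (tree_edge_parent tab) => [[ar eb]|[br ea]].
  have [<-|ay] := eqVneq a y; first by rewrite -eb.
  by rewrite eb (descendant_parent ya ay) in yb.
by rewrite ea in ya; rewrite (descendant_child br ya) in yb.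
Qed.

Lemma iter_parent_in_subtree S y k : connected_in t S -> y \in S ->
  k <= depth y - depth (top S) -> iter k parent y \in S.
Proof.
move=> cS yS; have S0 : S != set0 by apply/set0Pn; exists y.
elim: k => [//|k IH] lt_k; rewrite iterS.
apply: (parent_in_subtree cS S0 (IH (ltnW lt_k))).
by apply/eqP=> top_k; have := depth_iter_parent k y; rewrite top_k; lia.
Qed.

Lemma iter_parent_top S y : connected_in t S -> y \in S ->
  iter (depth y - depth (top S)) parent y = top S.
Proof.
move=> cS yS; have S0 : S != set0 by apply/set0Pn; exists y.
have [sS min_s] := top_spec S0; set z := iter _ parent y.
have zS : z \in S by apply: iter_parent_in_subtree.
have dz : depth z = depth (top S).
  by rewrite depth_iter_parent; have := min_s y yS; lia.
apply/eqP; apply: contraT => zs; have pS := parent_in_subtree cS S0 zS zs.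
have [zr|zr] := eqVneq z r.
  have top_r : top S = r by apply: (depth_eq0 (t_conn _)); rewrite -dz zr depth_root.
  by rewrite zr top_r eqxx in zs.
by have := depth_parent zr; have := min_s _ pS; lia.
Qed.

Lemma iter_depth_parent x : iter (depth x) parent x = r.
Proof. by apply: (depth_eq0 (t_conn _)); rewrite depth_iter_parent subnn. Qed.

Lemma top_in_subtree S S' x : connected_in t S -> connected_in t S' ->
  x \in S -> x \in S' -> depth (top S) <= depth (top S') -> top S' \in S.
Proof.
move=> cS cS' xS xS' le_top; rewrite -(iter_parent_top cS' xS').
by apply: iter_parent_in_subtree => //; apply: leq_sub2l.
Qed.

Lemma connect_iter_parent (X : {set I}) x k :
  (forall l, l <= k -> iter l parent x \in X) -> connect (induced_rel t X) x (iter k parent x).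
Proof.
elim: k => [|k IH] inX; first exact: connect0.
apply: connect_trans (IH (fun l le_lk => inX l (leqW le_lk))) _.
rewrite iterS; have [->|xr] := eqVneq (iter k parent x) r; first by rewrite parent_root.
have [tx _] := parent_step xr; apply: connect1.
by rewrite /induced_rel tx -iterS !inX.
Qed.
End RootedTree.

Lemma induced_rel_sym (I : finType) (t : rel I) (X : {set I}) :
  symmetric t -> symmetric (induced_rel t X).
Proof. by move=> t_sym x y; rewrite /induced_rel t_sym [(x \in X) && _]andbC. Qed.

(* Root the tree anywhere and take [j] whose subtree has the deepest top:
   that top lies in every other subtree, as each meets [F j]. *)
Lemma subtrees_common_point (I J : finType) (t : rel I) (F : J -> {set I}) :
  is_tree t -> (forall j, connected_in t (F j)) ->
  (forall j j', F j :&: F j' != set0) ->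
  exists i, forall j, i \in F j.
Proof.
move=> /[dup] t_tree [_ _ /card_gt0P[r _] _ _] cF meetF.
have [j0 _|J0] := pickP (@predT J); last by exists r => j; have := J0 j.
case: (arg_maxnP (fun j => depth t r (top t r (F j))) (isT : predT j0)) => jm _ max_jm.
exists (top t r (F jm)) => j; have /set0Pn[x] := meetF j jm.
rewrite inE => /andP[xj xm].
exact: (top_in_subtree t_tree (cF j) (cF jm) xj xm (max_jm j isT)).
Qed.

Lemma subtrees_meet_connected (I J : finType) (t : rel I) (F : J -> {set I}) :
  is_tree t -> (forall j, connected_in t (F j)) ->
  connected_in t [set i | [forall j, i \in F j]].
Proof.
move=> /[dup] t_tree [t_sym _ /card_gt0P[r _] _ _] cF; set X := [set i | _].
suff [s to_s] : exists s, {in X, forall x, connect (induced_rel t X) x s}.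
  apply/forall_inP=> x xX; apply/forall_inP=> y yX; apply: connect_trans (to_s x xX) _.
  by rewrite (sym_connect_sym (induced_rel_sym _ t_sym)) to_s.
have [j0 _|J0] := pickP (@predT J); last first.
  exists r => x _; rewrite -(iter_depth_parent r t_tree x).
  by apply: connect_iter_parent => // l _; rewrite inE; apply/forallP=> j; have := J0 j.
case: (arg_maxnP (fun j => depth t r (top t r (F j))) (isT : predT j0)) => jm _ max_jm.
exists (top t r (F jm)) => x; rewrite inE => /forallP xF.
rewrite -(iter_parent_top r t_tree (cF jm) (xF jm)).
apply: connect_iter_parent => // l le_l; rewrite inE; apply/forallP=> j.
apply: iter_parent_in_subtree => //; apply: leq_trans le_l _.
exact/leq_sub2l/max_jm.
Qed.

Section Contraction.
Variables (V W I : finType) (e : rel V) (f : rel W) (t : rel I).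
Variable B : I -> {set V * W}.
Hypothesis e_sym : symmetric e.
Hypothesis B_td : tree_decomposition (strong_prod e f) t B.
Variables (n : nat) (C : 'I_n -> {set W}).
Hypothesis C_neq0 : forall j, C j != set0.
Hypothesis C_connected : forall j, connected_in f (C j).
Hypothesis C_disjoint : forall j j', j != j' -> [disjoint C j & C j'].
Hypothesis C_adjacent :
  forall j j', j != j' -> [exists x in C j, exists y in C j', f x y].

Definition occurrences (x : V * W) : {set I} := [set i | x \in B i].

Definition branch_occurrences (v : V) (j : 'I_n) : {set I} :=
  \bigcup_(h in C j) occurrences (v, h).

Definition contracted_bag (i : I) : {set V} :=
  [set v | [forall j, i \in branch_occurrences v j]].

Lemma occurrences_meet v u h h' : (v == u) || e v u -> (h == h') || f h h' ->
  occurrences (v, h) :&: occurrences (u, h') != set0.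
Proof.
case: B_td => _ B_cover B_edge _ vu hh'; apply/set0Pn.
have [<-|neq] := eqVneq (v, h) (u, h').
  by have [i vi] := B_cover (v, h); exists i; rewrite !inE vi.
have [i /andP[vi ui]] := B_edge (v, h) (u, h') (introT and3P (And3 neq vu hh')).
by exists i; rewrite !inE vi ui.
Qed.

Lemma branch_occurrences_connected v j : connected_in t (branch_occurrences v j).
Proof.
case: B_td => _ _ _ B_connected; apply: connected_in_bigcup (C_connected j) _ _.
  by move=> h _; apply: B_connected.
by move=> h h' _ _ fhh'; rewrite occurrences_meet ?eqxx ?fhh' ?orbT.
Qed.

Lemma branch_occurrences_meet v u j j' : (v == u) || e v u ->
  branch_occurrences v j :&: branch_occurrences u j' != set0.
Proof.
move=> vu; have [h [h' [hC h'C hh']]] :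
    exists h h', [/\ h \in C j, h' \in C j' & (h == h') || f h h'].
  have [<-|jj'] := eqVneq j j'.
    by have /set0Pn[h hC] := C_neq0 j; exists h, h; rewrite hC eqxx.
  have /exists_inP[h hC /exists_inP[h' h'C fhh']] := C_adjacent jj'.
  by exists h, h'; rewrite fhh' orbT.
have /set0Pn[i] := occurrences_meet vu hh'; rewrite inE => /andP[vi ui].
by apply/set0Pn; exists i; rewrite inE; apply/andP; split; apply/bigcupP;
  [exists h | exists h'].
Qed.

Let t_tree : is_tree t. Proof. by case: B_td. Qed.

Lemma contracted_bags_meet v u : (v == u) || e v u ->
  exists i, (v \in contracted_bag i) && (u \in contracted_bag i).
Proof.
move=> vu; pose F (bj : bool * 'I_n) := branch_occurrences (if bj.1 then v else u) bj.2.
have [|[b j] [b' j']|i Fi] := subtrees_common_point (F := F) t_tree.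
- by move=> ?; apply: branch_occurrences_connected.
- by apply: branch_occurrences_meet; case: b; case: b'; rewrite ?eqxx // (eq_sym u) e_sym.
exists i; rewrite !inE; apply/andP; split; apply/forallP=> j.
  exact: (Fi (true, j)).
exact: (Fi (false, j)).
Qed.

Lemma contracted_bag_td : tree_decomposition e t contracted_bag.
Proof.
split=> //.
- by move=> v; have [|i /andP[vi _]] := @contracted_bags_meet v v; [rewrite eqxx | exists i].
- by move=> v u evu; apply: contracted_bags_meet; rewrite evu orbT.
move=> v; have -> : [set i | v \in contracted_bag i] =
                    [set i | [forall j, i \in branch_occurrences v j]].
  by apply/setP=> i; rewrite !inE.
exact: subtrees_meet_connected t_tree (@branch_occurrences_connected v).
Qed.

(* [(v, j) |-> (v, h)] with [h] a vertex of [C j] such that [(v, h) \in B i]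
   is injective since the [C j] are disjoint. *)
Lemma card_contracted_bag i : #|contracted_bag i| * n <= #|B i|.
Proof.
have [->|n_gt0] := posnP n; first by rewrite muln0.
have [h0 _] := set0Pn _ (C_neq0 (Ordinal n_gt0)).
pose g (p : V * 'I_n) := (p.1, odflt h0 [pick h in C p.2 | (p.1, h) \in B i]).
have gP p : p \in setX (contracted_bag i) [set: 'I_n] ->
    ((g p).2 \in C p.2) && (g p \in B i).
  case: p => v j; rewrite !inE andbT => /forallP/(_ j)/bigcupP[h hC].
  rewrite inE /g /= => vh; case: pickP => [h' // | /(_ h)].
  by rewrite hC vh.
rewrite -[n]card_ord -cardsT -cardsX -(card_in_imset (f := g)).
  by apply/subset_leq_card/subsetP=> _ /imsetP[p /gP/andP[_ gpB] ->].
move=> [v j] [v' j'] /gP/andP[gC _] /gP/andP[gC' _] [ev eh]; subst v'.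
have [-> //|jj'] := eqVneq j j'.
by move: gC gC'; rewrite /= eh => /(disjointFr (C_disjoint jj')) ->.
Qed.
End Contraction.

Lemma has_tw_le_treewidth (V : finType) (e : rel V) : has_tw_le e (treewidth e).
Proof.
by rewrite /treewidth; case: ex_minnP => k; rewrite /dec_tw; case: excluded_middle_informative.
Qed.

Lemma treewidth_min (V : finType) (e : rel V) k : has_tw_le e k -> treewidth e <= k.
Proof.
rewrite /treewidth => tw_k; case: ex_minnP => m _; apply.
by rewrite /dec_tw; case: excluded_middle_informative.
Qed.

Lemma treewidth_lt_bags (V I : finType) (e : rel V) (t : rel I) (B : I -> {set V}) m :
  0 < #|V| -> tree_decomposition e t B -> (forall i, #|B i| <= m) -> treewidth e < m.
Proof.
move=> /card_gt0P[v _] /[dup] B_td [_ B_cover _ _] B_m; have [i vi] := B_cover v.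
have m_gt0 : 0 < m by apply: leq_trans (B_m i); apply/card_gt0P; exists v.
by rewrite -(prednK m_gt0) ltnS; apply: treewidth_min; exists I, t, B; rewrite prednK.
Qed.

Lemma has_K_minor0 (W : finType) (f : rel W) : has_K_minor f 0.
Proof. by apply/existsP; exists [ffun => set0]; apply/and4P; split; apply/forallP; case. Qed.

Lemma has_K_minor_hadwiger (W : finType) (f : rel W) : has_K_minor f (hadwiger f).
Proof.
have [|m Km max_m] := @eq_bigmax_cond _ (fun m : 'I_#|W|.+1 => has_K_minor f m) val.
  by apply/card_gt0P; exists ord0; apply: has_K_minor0.
by have -> : hadwiger f = m := max_m.
Qed.

Theorem mainTheorem12 (V W : finType) (e : rel V) (f : rel W)
  (e_sym : symmetric e) (e_irr : irreflexive e)
  (f_sym : symmetric f) (f_irr : irreflexive f)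
  (V_ne : 0 < #|V|) (W_ne : 0 < #|W|) :
  hadwiger f * (treewidth e + 1) - 1 <= treewidth (strong_prod e f).
Proof.
have [I [t [B [B_td B_width]]]] := has_tw_le_treewidth (strong_prod e f).
have [-> //|n_gt0] := posnP (hadwiger f).
have /existsP[C /and4P[/forallP C_neq0 /forallP C_conn /forallP C_disj /forallP C_adj]] :=
  has_K_minor_hadwiger f.
set n := hadwiger f in n_gt0 C C_neq0 C_conn C_disj C_adj *.
set w := treewidth (strong_prod e f) in B_width *.
have C_disj' j j' : j != j' -> [disjoint C j & C j'] := implyP (forallP (C_disj j) j').
have C_adj' j j' : j != j' -> [exists x in C j, exists y in C j', f x y] :=
  implyP (forallP (C_adj j) j').
have Bc_width i : #|contracted_bag B C i| <= w.+1 %/ n.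
  by rewrite leq_divRL // (leq_trans (card_contracted_bag B C_neq0 C_disj' i)).
have := treewidth_lt_bags V_ne (contracted_bag_td e_sym B_td C_neq0 C_conn C_adj') Bc_width.
by rewrite leq_divRL //; lia.
Qed.
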